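(* Let $S^+=\{\overline{\jmath}_1,\dots,\overline{\jmath}_\nu\}$ be a set of distinct positive integers, $S=S^+\cup(-S^+)$, $S^c=\mathbb{Z}\setminus(S\cup\{0\})$, $\lambda(j)=j\frac{4+j^2}{1+j^2}$ and $\overline\omega=(\lambda(\overline{\jmath}_1),\dots,\lambda(\overline{\jmath}_\nu))$. There exists a constant $C>0$ depending on the set $S$ such that the following holds: if $j,j'\in S^c$, $j\ne j'$, $\ell\in\mathbb{Z}^\nu$ with $0<|\ell|\le2$ (where $|\ell|=\sum_i|\ell_i|$), $\sum_{i=1}^\nu\overline{\jmath}_i\ell_i+j-j'=0$ and $\delta_{\ell jj'}:=\overline\omega\cdot\ell+\lambda(j)-\lambda(j')\ne0$, then $|\delta_{\ell jj'}|\ge C$. *)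

From mathcomp Require Import all_boot all_order all_algebra.
From mathcomp Require Import reals.
Set Implicit Arguments. Unset Strict Implicit. Unset Printing Implicit Defensive.
Import Order.TTheory GRing.Theory Num.Theory.
Local Open Scope ring_scope.

Definition lam (R : realType) (j : int) : R :=
  (j%:~R * (4 + j%:~R ^+ 2)) / (1 + j%:~R ^+ 2).

Definition inS (nu : nat) (jb : 'I_nu -> int) (j : int) : bool :=
  [exists i, (j == jb i) || (j == - jb i)].

Definition inSc (nu : nat) (jb : 'I_nu -> int) (j : int) : bool :=
  (j != 0) && ~~ inS jb j.

Definition l1norm (nu : nat) (l : 'I_nu -> int) : int := \sum_i `|l i|.

Definition delta (R : realType) (nu : nat) (jb : 'I_nu -> int)
  (l : 'I_nu -> int) (j j' : int) : R :=
  \sum_i lam R (jb i) * (l i)%:~R + lam R j - lam R j'.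

From mathcomp Require Import all_boot all_order all_algebra.
From mathcomp Require Import reals ring lra zify.
Set Implicit Arguments. Unset Strict Implicit. Unset Printing Implicit Defensive.
Import Order.TTheory GRing.Theory Num.Theory.
Local Open Scope ring_scope.

(* Write lambda(x) = x + g(x) with g(x) = 3x/(1+x^2). Under momentum
   conservation the integer parts cancel and
   delta = A + g(j) - g(j') with A = sum_i g(jb_i) l_i.
   For 0 < |l| <= 2, A <> 0: it is a nonempty sum of values of g > 0 on
   positive integers, up to sign, or a difference g(jb_b) - g(jb_a) with
   a <> b, and g is injective on positive integers. As A * P is an integer
   for P = prod_i (1 + jb_i^2), |A| >= 1/P.
   If |j|, |j'| >= 12P, then |g(j)|, |g(j')| <= 3/(12P), so |delta| >= 1/(2P).
   Otherwise, since |j - j'| <= 2 sum_i jb_i, both |j| and |j'| are at most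
   K = 12P + 2 sum_i jb_i, and delta * P (1+j^2) (1+j'^2) is a nonzero
   integer, so |delta| >= 1/(P (1+K^2)^2). *)

Lemma norm_le_l1norm (nu : nat) (l : 'I_nu -> int) (i : 'I_nu) :
  `|l i| <= l1norm l.
Proof. by rewrite /l1norm (bigD1 i) //= lerDl sumr_ge0. Qed.

Lemma l1norm_gt0 (nu : nat) (l : 'I_nu -> int) :
  0 < l1norm l -> exists i, l i != 0.
Proof.
move=> l_gt0; apply/existsP; apply: contraTT l_gt0 => /existsPn l0.
by rewrite /l1norm big1 // => i _; move/negPn/eqP: (l0 i) ->.
Qed.

Lemma l1norm_le2_mixed_sign (nu : nat) (l : 'I_nu -> int) (a b : 'I_nu) :
  l1norm l <= 2 -> l a < 0 -> 0 < l b ->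
  [/\ l a = -1, l b = 1 & forall i, i != a -> i != b -> l i = 0].
Proof.
move=> l_le2 la_lt0 lb_gt0.
have ab : a != b by apply: contraTneq la_lt0 => ->; rewrite -leNgt ltW.
move: l_le2; rewrite /l1norm (bigD1 a) //= (bigD1 b) /=; last by rewrite eq_sym.
rewrite ltr0_norm // gtr0_norm //.
set rest := \sum_(i | _) _; have rest_ge0 : 0 <= rest by exact: sumr_ge0.
move=> l_le2; have rest0 : rest = 0 by lia.
split=> [||i ia ib]; [lia | lia |].
apply/normr0_eq0/(psumr_eq0P (fun k _ => normr_ge0 (l k)) rest0).
by rewrite ia ib.
Qed.

Section LamCorrection.
Variable R : realFieldType.

Definition lam_corr (x : int) : R := 3 * x%:~R / (1 + x%:~R ^+ 2).

Lemma sqr1D_gt0 (x : R) : 0 < 1 + x ^+ 2.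
Proof. by rewrite ltr_pwDl ?sqr_ge0. Qed.

Lemma lam_corrMden (x : int) : lam_corr x * (1 + x%:~R ^+ 2) = 3 * x%:~R.
Proof. by rewrite divfK ?gt_eqF ?sqr1D_gt0. Qed.

Lemma lam_corr_gt0 (x : int) : 0 < x -> 0 < lam_corr x.
Proof. by move=> x_gt0; rewrite divr_gt0 ?sqr1D_gt0 ?mulr_gt0 ?ltr0z. Qed.

Lemma lam_corr_inj : {in [pred x : int | 0 < x] &, injective lam_corr}.
Proof.
move=> x y; rewrite !inE => x_gt0 y_gt0 corr_xy.
have three_neq0 : 3 != 0 :> R by rewrite pnatr_eq0.
have : x * (1 + y ^+ 2) = y * (1 + x ^+ 2).
  apply: (intr_inj (R := R)); apply/(mulfI three_neq0).
  rewrite !intrM !intrD !rmorphXn /= !mulrA -!lam_corrMden corr_xy.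
  by rewrite rmorph1 mulrAC.
rewrite !expr2; nia.
Qed.

Lemma norm_lam_corr_le (x : int) : `|lam_corr x| * `|x%:~R| <= 3.
Proof.
have := lam_corrMden x; set a : R := x%:~R => corrMden.
have : `|lam_corr x| * (1 + `|a| ^+ 2) = 3 * `|a|.
  rewrite real_normK ?num_real // -(ger0_norm (ltW (sqr1D_gt0 a))).
  by rewrite -normrM corrMden normrM normr_nat.
have := normr_ge0 a; have := normr_ge0 (lam_corr x); nra.
Qed.

Lemma lam_corr_far_bound (P a : R) (x y : int) :
  1 <= P * `|a| -> 12 * P <= `|x%:~R| -> 12 * P <= `|y%:~R| ->
  1 <= 2 * P * `|a + lam_corr x - lam_corr y|.
Proof.
move=> Pa_ge1 x_far y_far.
have P_gt0 : 0 < P by have := normr_ge0 a; nra.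
have corr_x_small : 4 * (P * `|lam_corr x|) <= 1.
  have := norm_lam_corr_le x; have := normr_ge0 (lam_corr x); nra.
have corr_y_small : 4 * (P * `|lam_corr y|) <= 1.
  have := norm_lam_corr_le y; have := normr_ge0 (lam_corr y); nra.
set d := a + lam_corr x - lam_corr y.
have : `|a| <= `|d| + `|lam_corr x| + `|lam_corr y|.
  have -> : a = d - lam_corr x + lam_corr y by rewrite /d; ring.
  by rewrite (le_trans (ler_normD _ _)) // lerD2r ler_normB.
nra.
Qed.

End LamCorrection.

Lemma far_or_near (R : realFieldType) (x y c e : R) : `|x - y| <= e ->
  (c <= `|x| /\ c <= `|y|) \/ (`|x| <= c + e /\ `|y| <= c + e).
Proof.
move=> xy_le; have := ler_dist_dist x y; rewrite ler_norml => /andP[].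
by case: (lerP c `|x|); case: (lerP c `|y|); lra.
Qed.

Section OmegaCorrection.
Variables (R : realFieldType) (nu : nat) (jb : 'I_nu -> int).
Hypothesis jb_gt0 : forall i, 0 < jb i.
Hypothesis jb_inj : injective jb.

Definition omega_corr (l : 'I_nu -> int) : R :=
  \sum_i lam_corr R (jb i) * (l i)%:~R.

Lemma omega_corrN (l : 'I_nu -> int) :
  omega_corr (fun i => - l i) = - omega_corr l.
Proof.
by rewrite /omega_corr -sumrN; apply: eq_bigr => i _; rewrite intrN mulrN.
Qed.

Lemma omega_corr_gt0 (l : 'I_nu -> int) :
  (forall i, 0 <= l i) -> (exists i, l i != 0) -> 0 < omega_corr l.
Proof.
move=> l_ge0 [i li_neq0]; rewrite /omega_corr (bigD1 i) //=.
rewrite ltr_wpDr ?sumr_ge0 //.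
- by move=> k _; rewrite mulr_ge0 ?ler0z // ltW ?lam_corr_gt0.
- by rewrite mulr_gt0 ?lam_corr_gt0 // ltr0z lt_def li_neq0 l_ge0.
Qed.

Lemma omega_corr_neq0 (l : 'I_nu -> int) :
  0 < l1norm l <= 2 -> omega_corr l != 0.
Proof.
move=> /andP[/l1norm_gt0 l_neq0 l_le2].
have [/forallP l_ge0 | /forallPn[a]] := boolP [forall i, 0 <= l i].
  by rewrite gt_eqF ?omega_corr_gt0.
rewrite -ltNge => la_lt0.
have [/forallP l_le0 | /forallPn[b]] := boolP [forall i, l i <= 0].
  rewrite -oppr_eq0 -omega_corrN gt_eqF // omega_corr_gt0 // => [i|].
    by rewrite oppr_ge0.
  by case: l_neq0 => i li_neq0; exists i; rewrite oppr_eq0.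
rewrite -ltNge => lb_gt0.
have [la lb l0] := l1norm_le2_mixed_sign l_le2 la_lt0 lb_gt0.
have ab : a != b by apply: contraTneq la_lt0 => ->; rewrite -leNgt ltW.
rewrite /omega_corr (bigD1 a) //= (bigD1 b) /=; last by rewrite eq_sym.
rewrite big1 => [|i /andP[ia ib]]; last by rewrite l0 // mulr0.
rewrite la lb addr0 mulrN1 mulr1 addrC subr_eq0.
apply: contraNneq ab => corr_ba; apply/eqP/jb_inj/esym.
exact: lam_corr_inj _ _ (jb_gt0 b) (jb_gt0 a) corr_ba.
Qed.

End OmegaCorrection.

Lemma momentum_dist_le (R : numDomainType) (nu : nat) (jb l : 'I_nu -> int)
    (j j' : int) :
  (forall i, 0 < jb i) -> l1norm l <= 2 -> \sum_i jb i * l i + j - j' = 0 ->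
  `|j%:~R - j'%:~R| <= 2 * \sum_i (jb i)%:~R :> R.
Proof.
move=> jb_gt0 l_le2 momentum.
have : `|j - j'| <= 2 * \sum_i jb i.
  have -> : j - j' = - \sum_i jb i * l i by lia.
  rewrite normrN mulr_sumr (le_trans (ler_norm_sum _ _ _)) // ler_sum // => i _.
  rewrite normrM gtr0_norm // mulrC; apply: ler_wpM2r; first exact: ltW.
  exact: le_trans (norm_le_l1norm l i) l_le2.
by rewrite -(ler_int R) intr_norm intrM rmorph_sum intrB -pmulrn.
Qed.

Section Integrality.
Variable R : archiRealFieldType.

Lemma sqr1D_int (x : int) : 1 + (x%:~R : R) ^+ 2 \is a Num.int.
Proof. by rewrite rpredD ?rpredX ?int_num1 ?intr_int. Qed.

Lemma lam_corrMden_int (x : int) :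
  lam_corr R x * (1 + x%:~R ^+ 2) \is a Num.int.
Proof. by rewrite lam_corrMden rpredM ?natr_int ?intr_int. Qed.

Lemma omega_corrMprod_int (nu : nat) (jb l : 'I_nu -> int) :
  omega_corr R jb l * \prod_i (1 + (jb i)%:~R ^+ 2) \is a Num.int.
Proof.
rewrite /omega_corr mulr_suml rpred_sum // => i _.
rewrite mulrAC (bigD1 i) //= mulrA rpredM ?intr_int //.
rewrite rpredM ?lam_corrMden_int //.
by apply: rpred_prod => k _; apply: sqr1D_int.
Qed.

Lemma lam_corr_near_bound (P K a : R) (x y : int) :
  P \is a Num.int -> 0 < P -> a * P \is a Num.int ->
  `|x%:~R| <= K -> `|y%:~R| <= K -> a + lam_corr R x - lam_corr R y != 0 ->
  1 <= P * (1 + K ^+ 2) ^+ 2 * `|a + lam_corr R x - lam_corr R y|.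
Proof.
move=> P_int P_gt0 aP_int xK yK; set d := a + _ - _ => d_neq0.
have den_le (z : int) : `|z%:~R| <= K -> 1 + z%:~R ^+ 2 <= 1 + K ^+ 2 :> R.
  move=> zK; rewrite lerD2l -real_normK ?num_real //.
  by have := normr_ge0 (z%:~R : R); nra.
set Dx : R := 1 + x%:~R ^+ 2; set Dy : R := 1 + y%:~R ^+ 2.
have [Dx_gt0 Dy_gt0] : 0 < Dx /\ 0 < Dy by split; apply: sqr1D_gt0.
have d_int : d * (P * Dx * Dy) \is a Num.int.
  have -> : d * (P * Dx * Dy) = a * P * (Dx * Dy)
      + lam_corr R x * Dx * (P * Dy) - lam_corr R y * Dy * (P * Dx).
    by rewrite /d; ring.
  have [Dx_int Dy_int] := (sqr1D_int x, sqr1D_int y).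
  have [corrx_int corry_int] := (lam_corrMden_int x, lam_corrMden_int y).
  by rewrite rpredB ?rpredD ?(rpredM aP_int) ?(rpredM corrx_int)
    ?(rpredM corry_int) ?rpredM.
have dD_neq0 : d * (P * Dx * Dy) != 0 by rewrite !mulf_neq0 // gt_eqF.
have := norm_intr_ge1 d_int dD_neq0.
rewrite normrM (gtr0_norm (_ : 0 < P * Dx * Dy)) ?mulr_gt0 // mulrC.
move/le_trans; apply; apply: ler_wpM2r => //.
rewrite -mulrA ler_pM2l // expr2.
by apply: ler_pM; [apply: ltW | apply: ltW | apply: den_le | apply: den_le].
Qed.

Lemma prod_norm_omega_corr_ge1 (nu : nat) (jb l : 'I_nu -> int) :
  (forall i, 0 < jb i) -> injective jb -> 0 < l1norm l <= 2 ->
  1 <= \prod_i (1 + (jb i)%:~R ^+ 2) * `|omega_corr R jb l|.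
Proof.
move=> jb_gt0 jb_inj l_small.
have P_gt0 : 0 < \prod_i (1 + (jb i)%:~R ^+ 2) :> R.
  by apply: prodr_gt0 => i _; apply: sqr1D_gt0.
have omega_neq0 := omega_corr_neq0 R jb_gt0 jb_inj l_small.
have := norm_intr_ge1 (omega_corrMprod_int jb l)
  (mulf_neq0 omega_neq0 (lt0r_neq0 P_gt0)).
by rewrite normrM (gtr0_norm P_gt0) mulrC.
Qed.

End Integrality.

Lemma lamE (R : realType) (x : int) : lam R x = x%:~R + lam_corr R x.
Proof. by rewrite /lam /lam_corr; field; rewrite gt_eqF ?sqr1D_gt0. Qed.

Lemma deltaE (R : realType) (nu : nat) (jb l : 'I_nu -> int) (j j' : int) :
  \sum_i jb i * l i + j - j' = 0 ->
  delta R jb l j j' = omega_corr R jb l + lam_corr R j - lam_corr R j'.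
Proof.
move=> momentum; rewrite /delta /omega_corr.
under eq_bigr do rewrite lamE mulrDl -intrM.
rewrite big_split /= !lamE.
have := congr1 (fun z : int => z%:~R : R) momentum.
rewrite /= intrB intrD rmorph_sum; lra.
Qed.

Theorem lemmaC7 (R : realType) (nu : nat) (jb : 'I_nu -> int)
  (jb_pos : forall i, 0 < jb i) (jb_inj : injective jb) :
  exists C : R, 0 < C /\
    forall (j j' : int) (l : 'I_nu -> int),
      inSc jb j -> inSc jb j' -> j != j' ->
      0 < l1norm l <= 2 ->
      \sum_i jb i * l i + j - j' = 0 ->
      delta R jb l j j' != 0 ->
      C <= `|delta R jb l j j'|.
Proof.
pose P : R := \prod_i (1 + (jb i)%:~R ^+ 2).
pose Q : R := (1 + (12 * P + 2 * \sum_i (jb i)%:~R) ^+ 2) ^+ 2.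
have P_gt0 : 0 < P by apply: prodr_gt0 => i _; apply: sqr1D_gt0.
have P_int : P \is a Num.int by apply: rpred_prod => i _; apply: sqr1D_int.
have Q_ge1 : 1 <= Q by rewrite exprn_ege1 // lerDl sqr_ge0.
have Q_gt0 : 0 < Q := lt_le_trans ltr01 Q_ge1.
have PQ_gt0 : 0 < 2 * P * Q by rewrite mulr_gt0 // mulr_gt0.
exists (2 * P * Q)^-1.
(* The bound holds without [inSc jb j], [inSc jb j'] and [j != j']. *)
split=> [|j j' l _ _ _ l_small momentum]; first by rewrite invr_gt0.
rewrite deltaE //; set d := _ + _ - _ => d_neq0.
rewrite -div1r ler_pdivrMr //.
have d_ge0 := normr_ge0 d.
have omega_ge1 : 1 <= P * `|omega_corr R jb l|.
  exact: prod_norm_omega_corr_ge1 jb_pos jb_inj l_small.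
have /andP[_ l_le2] := l_small.
have [[j_far j'_far] | [j_near j'_near]] :=
  far_or_near (12 * P) (momentum_dist_le R jb_pos l_le2 momentum).
- have := lam_corr_far_bound omega_ge1 j_far j'_far; rewrite -/d; nra.
- have := lam_corr_near_bound P_int P_gt0 (omega_corrMprod_int R jb l)
    j_near j'_near d_neq0.
  rewrite -/d -/Q; nra.
Qed.
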